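(* Let $\mathcal{L},\mathcal{M}$ be matroids with $E(\mathcal{L})\cap E(\mathcal{M})=\{g\}$, $g$ neither a loop nor a coloop in either, and $\mathcal{N}=\mathcal{L}\oplus_g\mathcal{M}$. (a) With $N=Z(\mathbf{B}\mathcal{N};\mathbf{y})$, $L=Z(\mathbf{B}\mathcal{L};\mathbf{y})$, $M=Z(\mathbf{B}\mathcal{M};\mathbf{y})$: $N=L^gM_g+L_gM^g$. (b) With $N=Z(\mathbf{I}\mathcal{N};\mathbf{y})$, $L=Z(\mathbf{I}\mathcal{L};\mathbf{y})$, $M=Z(\mathbf{I}\mathcal{M};\mathbf{y})$: $N=L^gM_g+L_gM^g-L_gM_g$. (c) With $N=Z(\mathbf{S}\mathcal{N};\mathbf{y})$, $L=Z(\mathbf{S}\mathcal{L};\mathbf{y})$, $M=Z(\mathbf{S}\mathcal{M};\mathbf{y})$: $N=L^gM_g+L_gM^g-L^gM^g$.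
   Context: For a family $\mathcal{Q}$ of subsets of a finite set, $Z(\mathcal{Q};\mathbf{y})=\sum_{S\in\mathcal{Q}}\prod_{e\in S}y_e$; $\mathbf{B}\mathcal{M},\mathbf{I}\mathcal{M},\mathbf{S}\mathcal{M}$ are the sets of bases, independent sets and spanning sets of $\mathcal{M}$. For such a polynomial $P$, $P^g=P|_{y_g=0}$ and $P_g=\partial P/\partial y_g$. Two-sum: $\mathcal{N}$ is the matroid on $E(\mathcal{L})\cup E(\mathcal{M})\setminus\{g\}$ with $\mathrm{rank}_{\mathcal{N}}(S)=\mathrm{rank}_{\mathcal{L}}(S\cap E(\mathcal{L}))+\mathrm{rank}_{\mathcal{M}}(S\cap E(\mathcal{M}))-\nu(S)$, where $\nu(S)=1$ if $g$ is in the $\mathcal{L}$-closure of $S\cap E(\mathcal{L})$ and in the $\mathcal{M}$-closure of $S\cap E(\mathcal{M})$, and $\nu(S)=0$ otherwise. *)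

From HB Require Import structures.
From mathcomp Require Import all_boot all_order all_algebra.
From mathcomp Require Import mpoly.
Set Implicit Arguments. Unset Strict Implicit. Unset Printing Implicit Defensive.
Import GRing.Theory.
Local Open Scope ring_scope.

(* Elements of all ground sets live in the universe 'I_n; the variable y_e is 'X_e. *)

Definition is_matroid (n : nat) (E : {set 'I_n}) (r : {set 'I_n} -> nat) : Prop :=
  [/\ (forall S : {set 'I_n}, S \subset E -> (r S <= #|S|)%N),
      (forall S S' : {set 'I_n}, S \subset S' -> S' \subset E -> (r S <= r S')%N) &
      (forall S S' : {set 'I_n}, S \subset E -> S' \subset E ->
         (r (S :|: S') + r (S :&: S') <= r S + r S')%N)].

Definition mindep n (E : {set 'I_n}) (r : {set 'I_n} -> nat) (S : {set 'I_n}) : bool :=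
  (S \subset E) && (r S == #|S|).
Definition mspanning n (E : {set 'I_n}) (r : {set 'I_n} -> nat) (S : {set 'I_n}) : bool :=
  (S \subset E) && (r S == r E).
Definition mbasis n (E : {set 'I_n}) (r : {set 'I_n} -> nat) (S : {set 'I_n}) : bool :=
  mindep E r S && mspanning E r S.

Definition in_closure n (r : {set 'I_n} -> nat) (S : {set 'I_n}) (e : 'I_n) : bool :=
  r (e |: S) == r S.

Definition is_loop n (r : {set 'I_n} -> nat) (e : 'I_n) : bool := r [set e] == 0%N.
Definition is_coloop n (E : {set 'I_n}) (r : {set 'I_n} -> nat) (e : 'I_n) : bool :=
  (r (E :\ e) < r E)%N.

Definition two_sum_ground n (EL EM : {set 'I_n}) (g : 'I_n) : {set 'I_n} :=
  (EL :|: EM) :\ g.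
Definition two_sum_rank n (EL EM : {set 'I_n}) (rL rM : {set 'I_n} -> nat) (g : 'I_n)
  (S : {set 'I_n}) : nat :=
  (rL (S :&: EL) + rM (S :&: EM)
   - (in_closure rL (S :&: EL) g && in_closure rM (S :&: EM) g))%N.

Definition Zpoly (R : comNzRingType) n (Q : pred {set 'I_n}) : {mpoly R[n]} :=
  \sum_(S : {set 'I_n} | Q S) \prod_(e in S) 'X_e.

Definition setvar0 (R : comNzRingType) n (g : 'I_n) (P : {mpoly R[n]}) : {mpoly R[n]} :=
  P \mPo [tuple (if i == g then 0 else 'X_i) | i < n].

(* Split a subset of the ground set of N as A :|: B with A in E(L) - g and
   B in E(M) - g.  The rank formula of the 2-sum shows that, for bases,
   independent sets and spanning sets alike, A :|: B is in the family of N iff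
   either A is in the family of L and g |: B in that of M, or g |: A is in
   that of L and B in that of M.  Since P^g and P_g enumerate the sets A
   avoiding g with A, resp. g |: A, in the family, inclusion-exclusion over
   the two alternatives gives N = L^g M_g + L_g M^g minus the overlap term,
   which involves the sets A with both A and g |: A in the family: there are
   none for bases, they give L_g for independent sets (closed downwards) and
   L^g for spanning sets (closed upwards). *)

From HB Require Import structures.
From mathcomp Require Import all_boot all_order all_algebra.
From mathcomp Require Import mpoly.
From mathcomp Require Import zify.
Set Implicit Arguments. Unset Strict Implicit. Unset Printing Implicit Defensive.
Import GRing.Theory.
Local Open Scope ring_scope.

Section SubsetsOfDisjointUnion.
Variables (T : finType) (E1 E2 : {set T}).
Hypothesis disjE : [disjoint E1 & E2].
Implicit Types A B S : {set T}.

Lemma setUI_disjointl A B : A \subset E1 -> B \subset E2 -> (A :|: B) :&: E1 = A.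
Proof.
move=> AE1 BE2; rewrite setIUl (setIidPl AE1) disjoint_setI0 ?setU0 //.
by apply: disjointWl BE2 _; rewrite disjoint_sym.
Qed.

Lemma setUI_disjointr A B : A \subset E1 -> B \subset E2 -> (A :|: B) :&: E2 = B.
Proof.
move=> AE1 BE2; rewrite setIUl (setIidPl BE2) disjoint_setI0 ?set0U //.
exact: disjointWl AE1 disjE.
Qed.

Lemma big_subsets_setU (V : nmodType) (P Q : pred {set T}) (F : {set T} -> {set T} -> V) :
  \sum_(S : {set T} | [&& S \subset E1 :|: E2, P (S :&: E1) & Q (S :&: E2)])
     F (S :&: E1) (S :&: E2) =
  \sum_(A : {set T} | (A \subset E1) && P A) \sum_(B : {set T} | (B \subset E2) && Q B) F A B.
Proof.
rewrite pair_big_dep [RHS](reindex_onto (fun S : {set T} => (S :&: E1, S :&: E2))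
  (fun p : {set T} * {set T} => p.1 :|: p.2)) => [|[A B] /andP[/andP[/= AE1 _] /andP[BE2 _]]].
  apply: eq_bigl => S; rewrite /= !subsetIr /= -setIUr.
  by rewrite -(sameP setIidPl eqP) [RHS]andbC.
by rewrite setUI_disjointl ?setUI_disjointr.
Qed.

End SubsetsOfDisjointUnion.

Section GeneratingPolynomial.
Variables (R : comNzRingType) (n : nat).
Implicit Types (P Q : pred {set 'I_n}) (A B S E : {set 'I_n}).

Definition Xset S : {mpoly R[n]} := \prod_(e in S) 'X_e.

(* Unfolding [Zpoly] directly leaves sums that bigop rewrite rules such as
   [big_distrlr] fail to match; rewrite with [ZpolyE] instead. *)
Lemma ZpolyE Q : Zpoly R Q = \sum_(S | Q S) Xset S.
Proof. by []. Qed.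

Lemma setvar0_Xset g S : setvar0 g (Xset S) = if g \in S then 0 else Xset S.
Proof.
rewrite /setvar0 /Xset rmorph_prod.
under eq_bigr => e _ do rewrite /= comp_mpolyXU -tnth_nth tnth_map tnth_ord_tuple.
case: ifP => [gS | /negbT gNS]; first by rewrite (big_setD1 _ gS) /= eqxx mul0r.
by apply: eq_bigr => e eS; case: eqP => // eg; rewrite -eg eS in gNS.
Qed.

Lemma mderiv_Xset g S : (Xset S)^`M(g) = if g \in S then Xset (S :\ g) else 0.
Proof.
have mderiv_Xset_notin (T : {set 'I_n}) : g \notin T -> (Xset T)^`M(g) = 0.
  move=> gNT; rewrite /Xset; elim/big_rec: _ => [|e p eT IHp].
    by rewrite -mpolyC1 mderivC.
  rewrite mderivM IHp mulr0 addr0 mderivX mnm1E.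
  by case: eqP => [eg | _]; [rewrite -eg eT in gNT | rewrite scale0r mul0r].
case: ifP => [gS | /negbT]; last exact: mderiv_Xset_notin.
rewrite /Xset (big_setD1 _ gS) /= mderivM -/(Xset _) mderiv_Xset_notin ?setD11 //.
rewrite mulr0 addr0 mderivX mnm1E eqxx scale1r.
suff -> : (U_(g) - U_(g))%MM = 0%MM by rewrite mpolyX0 mul1r.
by apply/mnmP => i; rewrite mnmBE subnn mnm0E.
Qed.

Lemma Xset_setU A B : [disjoint A & B] -> Xset (A :|: B) = Xset A * Xset B.
Proof. by move=> dAB; rewrite /Xset -bigU //; apply: eq_bigl => e; rewrite !inE. Qed.

Lemma eq_Zpoly P Q : P =1 Q -> Zpoly R P = Zpoly R Q.
Proof. by move=> eqPQ; apply: eq_bigl. Qed.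

Lemma Zpoly_pred0 : Zpoly R (@pred0 {set 'I_n}) = 0.
Proof. exact: big_pred0. Qed.

Lemma Zpoly_incl_excl U I P Q :
    (forall S, U S = P S || Q S) -> (forall S, I S = P S && Q S) ->
  Zpoly R U = Zpoly R P + Zpoly R Q - Zpoly R I.
Proof.
move=> UE IE; rewrite !ZpolyE (eq_bigl _ _ UE) (eq_bigl _ _ IE) (bigID P) (bigID P Q) /=.
rewrite [X in _ = _ + (X + _) - _](eq_bigl (fun S => P S && Q S)) => [|S]; last exact: andbC.
rewrite addrA addrAC addrK; congr (_ + _); apply: eq_bigl => S.
all: by case: (P S); rewrite ?andbT ?andbF ?orbT.
Qed.

Lemma setvar0_Zpoly g E Q : (forall S, Q S -> S \subset E) ->
  setvar0 g (Zpoly R Q) = Zpoly R [pred A : {set 'I_n} | (A \subset E :\ g) && Q A].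
Proof.
move=> QE; rewrite ZpolyE {1}/setvar0 raddf_sum.
rewrite (eq_bigr (fun S => if g \notin S then Xset S else 0)) => [|S _]; last first.
  by rewrite -[LHS]/(setvar0 g (Xset S)) setvar0_Xset; case: ifP.
rewrite -big_mkcondr; apply: eq_bigl => A /=; rewrite subsetD1.
by case QA: (Q A); rewrite ?andbF ?andbT // (QE _ QA).
Qed.

Lemma mderiv_Zpoly g E Q : (forall S, Q S -> S \subset E) ->
  (Zpoly R Q)^`M(g) = Zpoly R [pred A : {set 'I_n} | (A \subset E :\ g) && Q (g |: A)].
Proof.
move=> QE; rewrite ZpolyE linear_sum.
rewrite (eq_bigr (fun S => if g \in S then Xset (S :\ g) else 0)) => [|S _]; last first.
  exact: mderiv_Xset.
rewrite -big_mkcondr (reindex_onto (fun A => g |: A) (fun S => S :\ g)); last first.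
  by move=> S /andP[_ gS]; exact: setD1K.
apply: eq_big => [A | S /andP[_ /eqP <-]]; last by rewrite setU1K ?setD11.
rewrite /= setU11 andbT subsetD1; have [gA | gNA] := boolP (g \in A).
  by rewrite andbF; case: eqP; rewrite ?andbF // => eqA; rewrite -eqA setD11 in gA.
rewrite setU1K // eqxx !andbT; case QgA: (Q _); rewrite ?andbF //.
by move: (QE _ QgA); rewrite andbT subUset => /andP[_ ->].
Qed.

Lemma Zpoly_setU1_exclusive g E Q :
    (forall A, A \subset E :\ g -> Q A -> ~~ Q (g |: A)) ->
  Zpoly R [pred A : {set 'I_n} | [&& A \subset E :\ g, Q A & Q (g |: A)]] = 0.
Proof.
move=> Qexcl; rewrite -Zpoly_pred0; apply: eq_Zpoly => A /=.
by case AE: (A \subset E :\ g); case QA: (Q A) => //=; apply/negbTE/Qexcl.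
Qed.

Lemma mderiv_Zpoly_down_closed g E Q : (forall S, Q S -> S \subset E) ->
    (forall A, A \subset E :\ g -> Q (g |: A) -> Q A) ->
  Zpoly R [pred A : {set 'I_n} | [&& A \subset E :\ g, Q A & Q (g |: A)]] = (Zpoly R Q)^`M(g).
Proof.
move=> QE Qdown; rewrite (mderiv_Zpoly _ QE); apply: eq_Zpoly => A /=.
by case AE: (A \subset E :\ g); rewrite //= andb_idl //; apply: Qdown.
Qed.

Lemma setvar0_Zpoly_up_closed g E Q : (forall S, Q S -> S \subset E) ->
    (forall A, A \subset E :\ g -> Q A -> Q (g |: A)) ->
  Zpoly R [pred A : {set 'I_n} | [&& A \subset E :\ g, Q A & Q (g |: A)]] = setvar0 g (Zpoly R Q).
Proof.
move=> QE Qup; rewrite (setvar0_Zpoly _ QE); apply: eq_Zpoly => A /=.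
by case AE: (A \subset E :\ g); rewrite //= andb_idr //; apply: Qup.
Qed.

Lemma Zpoly_mul E1 E2 P Q : [disjoint E1 & E2] ->
  Zpoly R [pred A : {set 'I_n} | (A \subset E1) && P A] *
  Zpoly R [pred B : {set 'I_n} | (B \subset E2) && Q B] =
  Zpoly R [pred S : {set 'I_n} | [&& S \subset E1 :|: E2, P (S :&: E1) & Q (S :&: E2)]].
Proof.
move=> dE; rewrite !ZpolyE big_distrlr -big_subsets_setU //.
apply: eq_bigr => S /and3P[SE _ _].
rewrite -[in RHS](setIidPl SE) setIUr Xset_setU //.
by apply: disjointWl (subsetIr _ _) _; apply: disjointWr (subsetIr _ _) dE.
Qed.

End GeneratingPolynomial.

Section Matroid.
Variables (n : nat) (E : {set 'I_n}) (r : {set 'I_n} -> nat).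
Hypothesis matE : is_matroid E r.
Implicit Types (A B : {set 'I_n}) (e : 'I_n).
Local Open Scope nat_scope.

Lemma rank_le_card A : A \subset E -> r A <= #|A|.
Proof. by case: matE => rA _ _; apply: rA. Qed.

Lemma rank_subset A B : A \subset B -> B \subset E -> r A <= r B.
Proof. by case: matE => _ rAB _; apply: rAB. Qed.

Lemma rank_setU1 e A : e \in E -> A \subset E ->
  r (e |: A) = r A + ~~ in_closure r A e.
Proof.
move=> eE AE; case: (matE) => _ _ submod.
have eE1 : [set e] \subset E by rewrite sub1set.
have eAE : e |: A \subset E by rewrite subUset eE1 AE.
have := submod _ _ eE1 AE; have := rank_le_card eE1.
have := rank_subset (subsetUr [set e] A) eAE.
rewrite /in_closure cards1; set reA := r (e |: A).
by case: eqP => [-> | neq] /=; lia.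
Qed.

Lemma mindep_setU1 e A : e \in E -> A \subset E :\ e ->
  mindep E r (e |: A) = mindep E r A && ~~ in_closure r A e.
Proof.
rewrite subsetD1 => eE /andP[AE eNA].
rewrite /mindep subUset sub1set eE AE rank_setU1 // cardsU1 eNA /=.
by have := rank_le_card AE; case: (in_closure r A e) => /=; lia.
Qed.

Lemma mspanning_superset A B : A \subset B -> B \subset E ->
  mspanning E r A -> mspanning E r B.
Proof.
move=> AB BE /andP[_ /eqP rAE]; rewrite /mspanning BE eqn_leq rank_subset //=.
by rewrite -rAE rank_subset.
Qed.

Lemma mspanning_in_closure e A : e \in E -> mspanning E r A -> in_closure r A e.
Proof.
move=> eE sA; have /andP[AE /eqP rAE] := sA.
have eAE : e |: A \subset E by rewrite subUset sub1set eE AE.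
have /andP[_ /eqP reAE] := mspanning_superset (subsetUr [set e] A) eAE sA.
by rewrite /in_closure reAE rAE.
Qed.

Lemma mbasis_setU1N e A : e \notin A -> mbasis E r A -> ~~ mbasis E r (e |: A).
Proof.
move=> eNA /andP[/andP[_ /eqP rA] /andP[_ /eqP rAE]].
apply/negP => /andP[/andP[_ /eqP]]; rewrite cardsU1 eNA => reA /andP[_ /eqP].
by rewrite reA -rAE rA; lia.
Qed.

Lemma in_closure_rank_gt0 e A : e \in E -> A \subset E -> ~~ is_loop r e ->
  in_closure r A e -> 0 < r A.
Proof.
move=> eE AE; rewrite /is_loop -lt0n /in_closure => re_gt0 /eqP <-.
apply: leq_trans re_gt0 (rank_subset _ _); first exact: subsetUl.
by rewrite subUset sub1set eE AE.
Qed.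

Lemma noncoloop_rank_setD1 e : ~~ is_coloop E r e -> r (E :\ e) = r E.
Proof.
rewrite /is_coloop -leqNgt => rE_le.
by apply/eqP; rewrite eqn_leq rE_le rank_subset ?subD1set.
Qed.

Lemma noncoloop_in_closure e : e \in E -> ~~ is_coloop E r e -> in_closure r (E :\ e) e.
Proof. by move=> eE ncE; rewrite /in_closure setD1K // noncoloop_rank_setD1. Qed.

End Matroid.

Lemma mindep_ground n (E : {set 'I_n}) r S : mindep E r S -> S \subset E.
Proof. by case/andP. Qed.

Lemma mspanning_ground n (E : {set 'I_n}) r S : mspanning E r S -> S \subset E.
Proof. by case/andP. Qed.

Lemma mbasis_ground n (E : {set 'I_n}) r S : mbasis E r S -> S \subset E.
Proof. by case/andP=> /mindep_ground. Qed.

(* [a], [b]: ranks of [A], [B]; [ca], [cb]: whether [g] lies in their closures;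
   [a'], [b']: ranks of the two matroids. *)
Lemma two_sum_rank_eqE (a b a' b' : nat) (ca cb : bool) :
  (a + ~~ ca <= a')%N -> (b + ~~ cb <= b')%N -> (ca -> 0 < a)%N ->
  (a + b - (ca && cb) == a' + b' - 1)%N =
  (a == a') && (b + ~~ cb == b') || (a + ~~ ca == a') && (b == b').
Proof. by case: ca cb => [] [] /=; lia. Qed.

Section TwoSum.
Variables (n : nat) (EL EM : {set 'I_n}) (rL rM : {set 'I_n} -> nat) (g : 'I_n).
Hypothesis ELM : EL :&: EM = [set g].
Local Notation EN := (two_sum_ground EL EM g).
Local Notation rN := (two_sum_rank EL EM rL rM g).
Local Open Scope nat_scope.

Let mem_ELM x : x \in EL -> x \in EM -> x = g.
Proof. by move=> xL xM; apply/set1P; rewrite -ELM inE xL xM. Qed.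

Lemma two_sum_gluing_l : g \in EL. Proof. by have := set11 g; rewrite -ELM inE => /andP[]. Qed.
Lemma two_sum_gluing_r : g \in EM. Proof. by have := set11 g; rewrite -ELM inE => /andP[]. Qed.

Lemma two_sum_groundE : EN = (EL :\ g) :|: (EM :\ g).
Proof. exact: setDUl. Qed.

Lemma disjoint_two_sum_l : [disjoint EL & EM :\ g].
Proof.
rewrite -setI_eq0; apply/eqP/setP => x; rewrite !inE.
by apply/negbTE/andP => -[xL /andP[/negP xNg xM]]; apply/xNg/eqP/mem_ELM.
Qed.

Lemma disjoint_two_sum_r : [disjoint EL :\ g & EM].
Proof.
rewrite -setI_eq0; apply/eqP/setP => x; rewrite !inE.
by apply/negbTE/andP => -[/andP[/negP xNg xL] xM]; apply/xNg/eqP/mem_ELM.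
Qed.

Lemma disjoint_two_sum : [disjoint EL :\ g & EM :\ g].
Proof. exact: disjointWr (subD1set _ _) disjoint_two_sum_r. Qed.

Hypotheses (matL : is_matroid EL rL) (matM : is_matroid EM rM).
Hypotheses (nlL : ~~ is_loop rL g) (ncL : ~~ is_coloop EL rL g).
Hypothesis ncM : ~~ is_coloop EM rM g.

Lemma two_sum_rank_ground : rN EN = rL EL + rM EM - 1.
Proof.
have ENL : EN :&: EL = EL :\ g.
  by rewrite two_sum_groundE (setUI_disjointl disjoint_two_sum_l) ?subD1set.
have ENM : EN :&: EM = EM :\ g.
  by rewrite two_sum_groundE (setUI_disjointr disjoint_two_sum_r) ?subD1set.
rewrite /two_sum_rank ENL ENM !noncoloop_in_closure ?two_sum_gluing_l ?two_sum_gluing_r //.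
by rewrite !noncoloop_rank_setD1.
Qed.

Variables A B : {set 'I_n}.
Hypotheses (AL : A \subset EL :\ g) (BM : B \subset EM :\ g).

Let A_EL : A \subset EL. Proof. by move: AL; rewrite subsetD1 => /andP[]. Qed.
Let B_EM : B \subset EM. Proof. by move: BM; rewrite subsetD1 => /andP[]. Qed.

Lemma two_sum_rank_setU :
  rN (A :|: B) = rL A + rM B - (in_closure rL A g && in_closure rM B g).
Proof.
rewrite /two_sum_rank (setUI_disjointl disjoint_two_sum_l) //.
by rewrite (setUI_disjointr disjoint_two_sum_r).
Qed.

Lemma two_sum_mindep : mindep EN rN (A :|: B) =
  mindep EL rL A && mindep EM rM (g |: B) || mindep EL rL (g |: A) && mindep EM rM B.
Proof.
rewrite (mindep_setU1 matL) ?two_sum_gluing_l // (mindep_setU1 matM) ?two_sum_gluing_r //.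
rewrite /mindep two_sum_rank_setU A_EL B_EM two_sum_groundE subUset.
rewrite (subset_trans AL (subsetUl _ _)) (subset_trans BM (subsetUr _ _)) /=.
rewrite cardsU disjoint_setI0 ?cards0 ?subn0; last first.
  exact: disjointWl A_EL (disjointWr BM disjoint_two_sum_l).
have eq_sum := leqif_add (leqif_eq (rank_le_card matL A_EL))
                         (leqif_eq (rank_le_card matM B_EM)).
case cA: (in_closure rL A g); case: (in_closure rM B g);
  rewrite /= ?subn0 ?andbT ?andbF ?orbF ?orFb ?orbb -?eq_sum //.
rewrite ltn_eqF //; apply: (@leq_trans (rL A + rM B)); last exact: eq_sum.
by rewrite subn1 ltn_predL addn_gt0 (in_closure_rank_gt0 matL two_sum_gluing_l A_EL nlL cA).
Qed.

Lemma two_sum_mspanning : mspanning EN rN (A :|: B) =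
  mspanning EL rL A && mspanning EM rM (g |: B) || mspanning EL rL (g |: A) && mspanning EM rM B.
Proof.
have gAL : g |: A \subset EL by rewrite subUset sub1set two_sum_gluing_l A_EL.
have gBM : g |: B \subset EM by rewrite subUset sub1set two_sum_gluing_r B_EM.
have := rank_subset matL gAL (subxx _); have := rank_subset matM gBM (subxx _).
rewrite /mspanning two_sum_rank_setU two_sum_rank_ground two_sum_groundE subUset.
rewrite (subset_trans AL (subsetUl _ _)) (subset_trans BM (subsetUr _ _)) A_EL B_EM gAL gBM /=.
rewrite (rank_setU1 matL) ?two_sum_gluing_l // (rank_setU1 matM) ?two_sum_gluing_r //.
move=> rB_le rA_le.
by rewrite two_sum_rank_eqE // => /(in_closure_rank_gt0 matL two_sum_gluing_l A_EL nlL).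
Qed.

Lemma two_sum_mbasis : mbasis EN rN (A :|: B) =
  mbasis EL rL A && mbasis EM rM (g |: B) || mbasis EL rL (g |: A) && mbasis EM rM B.
Proof.
rewrite /mbasis two_sum_mindep two_sum_mspanning.
rewrite (mindep_setU1 matL) ?two_sum_gluing_l // (mindep_setU1 matM) ?two_sum_gluing_r //.
have sAc : mspanning EL rL A ==> in_closure rL A g.
  by apply/implyP; apply: mspanning_in_closure two_sum_gluing_l.
have sBc : mspanning EM rM B ==> in_closure rM B g.
  by apply/implyP; apply: mspanning_in_closure two_sum_gluing_r.
move: sAc sBc.
case: (mindep EL rL A) (mindep EM rM B) (in_closure rL A g) (in_closure rM B g) => [] [] [] [];
by case: (mspanning EL rL A) (mspanning EM rM B) (mspanning EL rL (g |: A))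
  (mspanning EM rM (g |: B)) => [] [] [] [].
Qed.

End TwoSum.

Section TwoSumPolynomial.
Variables (R : comNzRingType) (n : nat) (EL EM : {set 'I_n}) (g : 'I_n).
Hypothesis ELM : EL :&: EM = [set g].
Implicit Types A B S : {set 'I_n}.
Variables QN QL QM : pred {set 'I_n}.
Hypotheses (QL_sub : forall A, QL A -> A \subset EL) (QM_sub : forall B, QM B -> B \subset EM)
  (QN_sub : forall S, QN S -> S \subset two_sum_ground EL EM g).
Hypothesis QN_split : forall A B, A \subset EL :\ g -> B \subset EM :\ g ->
  QN (A :|: B) = QL A && QM (g |: B) || QL (g |: A) && QM B.

Lemma Zpoly_two_sum :
  Zpoly R QN =
  setvar0 g (Zpoly R QL) * (Zpoly R QM)^`M(g) + (Zpoly R QL)^`M(g) * setvar0 g (Zpoly R QM)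
  - Zpoly R [pred A : {set 'I_n} | [&& A \subset EL :\ g, QL A & QL (g |: A)]]
    * Zpoly R [pred B : {set 'I_n} | [&& B \subset EM :\ g, QM B & QM (g |: B)]].
Proof.
have dE := disjoint_two_sum ELM.
rewrite (setvar0_Zpoly _ _ QL_sub) (setvar0_Zpoly _ _ QM_sub).
rewrite (mderiv_Zpoly _ _ QL_sub) (mderiv_Zpoly _ _ QM_sub) !(Zpoly_mul _ _ _ dE).
apply: Zpoly_incl_excl => S /=; last first.
  by case: (S \subset _) (QL (S :&: _)) (QL (g |: _)) (QM (S :&: _)) (QM (g |: _))
    => [] [] [] [] [].
have [SE | SNE] := boolP (S \subset EL :\ g :|: EM :\ g); last first.
  by apply/negbTE; apply: contra SNE => /QN_sub; rewrite two_sum_groundE.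
by rewrite -{1}(setIidPl SE) setIUr QN_split ?subsetIr.
Qed.
End TwoSumPolynomial.

Section TwoSumGeneratingPolynomials.
Variables (R : comNzRingType) (n : nat) (EL EM : {set 'I_n}) (rL rM : {set 'I_n} -> nat).
Variable g : 'I_n.
Hypotheses (ELM : EL :&: EM = [set g]) (matL : is_matroid EL rL) (matM : is_matroid EM rM).
Hypotheses (nlL : ~~ is_loop rL g) (ncL : ~~ is_coloop EL rL g) (ncM : ~~ is_coloop EM rM g).
Local Notation EN := (two_sum_ground EL EM g).
Local Notation rN := (two_sum_rank EL EM rL rM g).

Lemma Zpoly_mbasis_two_sum :
  Zpoly R (mbasis EN rN) =
  setvar0 g (Zpoly R (mbasis EL rL)) * (Zpoly R (mbasis EM rM))^`M(g)
  + (Zpoly R (mbasis EL rL))^`M(g) * setvar0 g (Zpoly R (mbasis EM rM)).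
Proof.
rewrite (Zpoly_two_sum R ELM (@mbasis_ground _ _ _) (@mbasis_ground _ _ _) (@mbasis_ground _ _ _)
  (two_sum_mbasis ELM matL matM nlL ncL ncM)).
rewrite (Zpoly_setU1_exclusive R (E := EL)) ?mul0r ?subr0 // => A.
by rewrite subsetD1 => /andP[_]; apply: mbasis_setU1N.
Qed.

Lemma Zpoly_mindep_two_sum :
  Zpoly R (mindep EN rN) =
  setvar0 g (Zpoly R (mindep EL rL)) * (Zpoly R (mindep EM rM))^`M(g)
  + (Zpoly R (mindep EL rL))^`M(g) * setvar0 g (Zpoly R (mindep EM rM))
  - (Zpoly R (mindep EL rL))^`M(g) * (Zpoly R (mindep EM rM))^`M(g).
Proof.
rewrite (Zpoly_two_sum R ELM (@mindep_ground _ _ _) (@mindep_ground _ _ _) (@mindep_ground _ _ _)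
  (two_sum_mindep ELM matL matM nlL)).
rewrite !(mderiv_Zpoly_down_closed R (@mindep_ground _ _ _)) // => A AE.
  by rewrite (mindep_setU1 matM) ?(two_sum_gluing_r ELM) // => /andP[].
by rewrite (mindep_setU1 matL) ?(two_sum_gluing_l ELM) // => /andP[].
Qed.

Lemma Zpoly_mspanning_two_sum :
  Zpoly R (mspanning EN rN) =
  setvar0 g (Zpoly R (mspanning EL rL)) * (Zpoly R (mspanning EM rM))^`M(g)
  + (Zpoly R (mspanning EL rL))^`M(g) * setvar0 g (Zpoly R (mspanning EM rM))
  - setvar0 g (Zpoly R (mspanning EL rL)) * setvar0 g (Zpoly R (mspanning EM rM)).
Proof.
rewrite (Zpoly_two_sum R ELM (@mspanning_ground _ _ _) (@mspanning_ground _ _ _)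
  (@mspanning_ground _ _ _) (two_sum_mspanning ELM matL matM nlL ncL ncM)).
rewrite !(setvar0_Zpoly_up_closed R (@mspanning_ground _ _ _)) // => A;
  rewrite subsetD1 => /andP[AE _]; apply: mspanning_superset (subsetUr _ _) _ => //.
  by rewrite subUset sub1set AE (two_sum_gluing_r ELM).
by rewrite subUset sub1set AE (two_sum_gluing_l ELM).
Qed.

End TwoSumGeneratingPolynomials.

Theorem corollary5p7 (R : comNzRingType) (n : nat) (EL EM : {set 'I_n})
  (rL rM : {set 'I_n} -> nat) (g : 'I_n) :
  is_matroid EL rL -> is_matroid EM rM ->
  EL :&: EM = [set g] ->
  ~~ is_loop rL g -> ~~ is_coloop EL rL g ->
  ~~ is_loop rM g -> ~~ is_coloop EM rM g ->
  let EN := two_sum_ground EL EM g in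
  let rN := two_sum_rank EL EM rL rM g in
  [/\ (let N := @Zpoly R n (mbasis EN rN) in
       let L := @Zpoly R n (mbasis EL rL) in
       let M := @Zpoly R n (mbasis EM rM) in
       N = setvar0 g L * M^`M(g) + L^`M(g) * setvar0 g M),
      (let N := @Zpoly R n (mindep EN rN) in
       let L := @Zpoly R n (mindep EL rL) in
       let M := @Zpoly R n (mindep EM rM) in
       N = setvar0 g L * M^`M(g) + L^`M(g) * setvar0 g M - L^`M(g) * M^`M(g)) &
      (let N := @Zpoly R n (mspanning EN rN) in
       let L := @Zpoly R n (mspanning EL rL) in
       let M := @Zpoly R n (mspanning EM rM) in
       N = setvar0 g L * M^`M(g) + L^`M(g) * setvar0 g M - setvar0 g L * setvar0 g M)].
Proof.
(* [g] only needs to be a non-loop on one side. *)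
move=> matL matM ELM nlL ncL _ ncM EN rN; split.
- exact: Zpoly_mbasis_two_sum.
- exact: Zpoly_mindep_two_sum.
- exact: Zpoly_mspanning_two_sum.
Qed.
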